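(* Let $q>5$ be a prime power which cannot be written as $2^p$ with $p$ prime. Then, for any generator $w$ of $\mathbb F_q^*$, the group $G(q)$ contains the permutation of $\mathbb F_q^*$ induced by $c\mapsto wc$, which is a $(q-1)$-cycle.
   Context: $\mathbb F_q$ is the field with $q$ elements, $\mathbb F_q^*$ its multiplicative group. $G(q)$ denotes the group of permutations of $\mathbb F_q^*$ generated by all permutations of $\mathbb F_q^*$ which can be represented as $c\mapsto ac^m+bc^n$ with $a,b\in\mathbb F_q^*$ and integers $0<m<n<q$. *)

From HB Require Import structures.
From mathcomp Require Import all_boot all_order all_algebra all_fingroup all_field.
Set Implicit Arguments. Unset Strict Implicit. Unset Printing Implicit Defensive.
Import GRing.Theory.
Local Open Scope ring_scope.

(* The multiplicative group F^* of a finite field F is modelled by {unit F}. *)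

(* s is a permutation of F^* represented as c |-> a c^m + b c^n with
   a, b nonzero and integers 0 < m < n < q, where q = #|F|
   (n ranges over 'I_#|F|, which encodes n < q). *)
Definition binomial_perm (F : finFieldType) (s : {perm {unit F}}) : bool :=
  [exists a : F, exists b : F, exists m : 'I_#|F|, exists n : 'I_#|F|,
    [&& a != 0, b != 0, (0 < m)%N, (m < n)%N &
        [forall c : {unit F},
           val (s c) == a * (val c) ^+ m + b * (val c) ^+ n]]].

Definition Gq (F : finFieldType) : {set {perm {unit F}}} :=
  <<[set s : {perm {unit F}} | binomial_perm s]>>%g.

From HB Require Import structures.
From mathcomp Require Import all_boot all_order all_algebra all_fingroup all_field.
From mathcomp Require Import cyclic zify ring.

(** It suffices to show that multiplication by a primitive root W of F_q is a
    composite of binomial permutations x |-> a x^m + b x^n; its orbits then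
    exhaust F_q^*.
    If a binomial f satisfies f (f x) = lambda x, then W x = (W / lambda) f (f x).
    In odd characteristic, with h = (q-1)/2, a + b = W and a - b = W^3, the map
    f x = x (a + b x^h) multiplies squares by W and non-squares by W^3, hence
    f o f = W^4.  For q = Q^2 in characteristic 2, f x = x + W x^Q gives
    f o f = 1 + W^(Q+1).
    For q = 2^e with e odd and composite, write e = k r with r the least prime
    factor of e, Q = 2^k, and let g generate F_Q^*.  The additive binomials
    x |-> x + g^(2^i) x^(Q^(2^i)), i < t, compose to x |-> sum_(n < 2^t) g^n x^(Q^n),
    which is the identity once r (Q-1) divides 2^t - 1: grouping the terms n >= 1
    in blocks of r leaves a factor sum_l (g^r)^l = 0.  Scaling the last factor
    by W yields W x. *)

Set Implicit Arguments. Unset Strict Implicit. Unset Printing Implicit Defensive.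
Import GRing.Theory FinRing.Theory.
Local Open Scope ring_scope.

Definition binomial_map (R : pzRingType) (a b : R) (m n : nat) (x : R) : R :=
  a * x ^+ m + b * x ^+ n.

Section GqMap.
Variable F : finFieldType.

Definition Gq_map (f : F -> F) : Prop :=
  exists2 s : {perm {unit F}}, s \in Gq F & forall c : {unit F}, val (s c) = f (val c).

Lemma Gq_map_comp f g : Gq_map f -> Gq_map g -> Gq_map (g \o f).
Proof.
move=> [sf Gsf sfE] [sg Gsg sgE]; exists (sf * sg)%g; first exact: groupM.
by move=> c; rewrite permM sgE sfE.
Qed.

Lemma eq_Gq_map f g : f =1 g -> Gq_map f -> Gq_map g.
Proof. by move=> fg [s Gs sE]; exists s => // c; rewrite sE fg. Qed.

Lemma Gq_map_binomial (a b : F) (m n : nat) :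
  a != 0 -> b != 0 -> (0 < m < n)%N -> (n < #|F|)%N ->
  injective (binomial_map a b m n) -> Gq_map (binomial_map a b m n).
Proof.
move=> a0 b0 /andP[m0 mn] nF inj_f; set f := binomial_map a b m n.
have f0 : f 0 = 0.
  by rewrite /f /binomial_map !expr0n (gtn_eqF m0) (gtn_eqF (ltn_trans m0 mn)) !mulr0 addr0.
have Uf (c : {unit F}) : f (val c) \is a GRing.unit.
  by rewrite unitfE -f0 (inj_eq inj_f) -unitfE (valP c).
pose fu c : {unit F} := FinRing.unit F (Uf c).
have fu_inj : injective fu by move=> c d /(congr1 val) /inj_f /val_inj.
exists (perm fu_inj); last by move=> c; rewrite permE.
apply: mem_gen; rewrite inE; apply/existsP; exists a; apply/existsP; exists b.
apply/existsP; exists (Ordinal (ltn_trans mn nF)); apply/existsP; exists (Ordinal nF).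
by rewrite a0 b0 m0 mn; apply/forallP => c; rewrite permE.
Qed.

Lemma Gq_map_scaled_binomial (mu a b : F) (m n : nat) :
  mu != 0 -> a != 0 -> b != 0 -> (0 < m < n)%N -> (n < #|F|)%N ->
  injective (binomial_map a b m n) -> Gq_map (fun x => mu * binomial_map a b m n x).
Proof.
move=> mu0 a0 b0 mn nF inj_f.
apply: (@eq_Gq_map (binomial_map (mu * a) (mu * b) m n)).
  by move=> x; rewrite /binomial_map mulrDr !mulrA.
apply: Gq_map_binomial; rewrite ?mulf_neq0 //.
by move=> x y; rewrite /binomial_map -!mulrA -!mulrDr => /(mulfI mu0) /inj_f.
Qed.

Lemma Gq_map_scale_of_binomial_square (a b lambda : F) (m n : nat) :
  a != 0 -> b != 0 -> (0 < m < n)%N -> (n < #|F|)%N -> lambda != 0 ->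
  (forall x, binomial_map a b m n (binomial_map a b m n x) = lambda * x) ->
  forall W, W != 0 -> Gq_map (fun x => W * x).
Proof.
move=> a0 b0 mn nF l0 ffE W W0.
have inj_f : injective (binomial_map a b m n).
  by move=> x y /(congr1 (binomial_map a b m n)); rewrite !ffE => /(mulfI l0).
apply: (@eq_Gq_map ((fun x => W / lambda * binomial_map a b m n x) \o binomial_map a b m n)).
  by move=> x /=; rewrite ffE mulrA divfK.
apply: Gq_map_comp; first exact: Gq_map_binomial.
by apply: Gq_map_scaled_binomial; rewrite ?mulf_neq0 ?invr_eq0.
Qed.

End GqMap.

Lemma expf_card_pred (F : finFieldType) (x : F) : x != 0 -> x ^+ #|F|.-1 = 1.
Proof.
move=> x0; apply: (mulIf x0); rewrite mul1r -exprSr prednK ?expf_card //.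
exact: ltn_trans (finNzRing_gt1 F).
Qed.

Lemma expf_cardX (F : finFieldType) (x : F) m : x ^+ (#|F| ^ m) = x.
Proof. by elim: m => [|m IHm]; rewrite ?expr1 // expnSr exprM IHm expf_card. Qed.

Lemma generator_prim_root (F : finFieldType) (w : {unit F}) :
  <[w]>%g = [set: {unit F}] -> #|F|.-1.-primitive_root (val w).
Proof.
move=> gen; have ow : #[w]%g = #|F|.-1 by rewrite /order gen card_finField_unit.
apply/andP; split; first by rewrite -ow order_gt0.
apply/forallP => i; rewrite unity_rootE -val_unitX -val_unit1 val_eqE -order_dvdn ow.
have [-> | ne] := eqVneq i.+1 #|F|.-1; first by rewrite dvdnn.
by rewrite eqbF_neg; apply/negP => /dvdn_leq; have := ltn_ord i; lia.
Qed.

Lemma odd_char_card_pred_even (F : finFieldType) : (2%:R : F) != 0 -> ~~ odd #|F|.-1.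
Proof.
apply: contra => odd_q; have := @expf_card_pred F (-1).
rewrite oppr_eq0 oner_eq0 -signr_odd odd_q expr1 => /(_ isT) N1.
by rewrite -[2%N]/(1 + 1)%N natrD -{1}N1 addNr.
Qed.

Lemma expf_half_card (F : finFieldType) (x : F) : (2%:R : F) != 0 -> x != 0 ->
  x ^+ #|F|.-1./2 = 1 \/ x ^+ #|F|.-1./2 = -1.
Proof.
move=> two_neq0 x0; have : (x ^+ #|F|.-1./2) ^+ 2 == 1.
  by rewrite -exprM muln2 even_halfK ?odd_char_card_pred_even ?expf_card_pred.
by rewrite sqrf_eq1 => /orP[] /eqP; [left | right].
Qed.

Lemma Gq_map_scale_odd_char (F : finFieldType) (W : F) :
  (2%:R : F) != 0 -> (5 < #|F|)%N -> #|F|.-1.-primitive_root W ->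
  Gq_map (fun x => W * x).
Proof.
move=> two_neq0 F5 primW; set n := #|F|.-1; set h := n./2.
have n4 : (4 < n)%N by rewrite /n; lia.
have W0 : W != 0 by rewrite (prim_root_eq0 primW); lia.
have Wn1 i : (0 < i < n)%N -> W ^+ i != 1.
  by move=> /andP[i0 lt_in]; rewrite -(prim_order_dvd primW); apply/negP => /dvdn_leq; lia.
have nE : n = h.*2 by rewrite even_halfK ?odd_char_card_pred_even.
have sqr_half (x : F) : x != 0 -> x ^+ h = 1 \/ x ^+ h = -1 by apply: expf_half_card.
have Wh : W ^+ h = -1.
  by case: (sqr_half W W0) => // Wh1; move: (Wn1 h); rewrite Wh1 eqxx; lia.
pose a := (W + W ^+ 3) / 2%:R; pose b := (W - W ^+ 3) / 2%:R.
have apb : a + b = W by rewrite /a /b; field.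
have amb : a - b = W ^+ 3 by rewrite /a /b; field.
have a0 : a != 0.
  rewrite mulf_neq0 ?invr_eq0 //; apply: contra (Wn1 4%N _) => [/eqP Wa|]; last lia.
  have : W * (W ^+ 4 - 1) = (W + W ^+ 3) * (W ^+ 2 - 1) by ring.
  by rewrite Wa mul0r => /eqP; rewrite mulf_eq0 (negbTE W0) subr_eq0.
have b0 : b != 0.
  rewrite mulf_neq0 ?invr_eq0 //; apply: contra (Wn1 2%N _) => [/eqP Wb|]; last lia.
  have : W * (1 - W ^+ 2) = W - W ^+ 3 by ring.
  by rewrite Wb => /eqP; rewrite mulf_eq0 (negbTE W0) subr_eq0 eq_sym.
have fE (x : F) : binomial_map a b 1 h.+1 x = x * (a + b * x ^+ h).
  by rewrite /binomial_map expr1 exprSr; ring.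
apply: (@Gq_map_scale_of_binomial_square _ a b (W ^+ 4) 1 h.+1); rewrite ?expf_neq0 //.
- by apply/andP; split; lia.
- by rewrite /n in nE; lia.
move=> x; have [-> | x0] := eqVneq x 0; first by rewrite !fE !mul0r mulr0.
rewrite !fE; case: (sqr_half x x0) => xh; rewrite xh.
- by rewrite mulr1 apb exprMn xh Wh mul1r mulrN1 amb; ring.
- have cubeN1 : (-1 : F) ^+ 3 = -1 by ring.
  by rewrite mulrN1 amb exprMn xh exprAC Wh cubeN1 mulrNN !mulr1 apb; ring.
Qed.

Lemma Gq_map_scale_char2_square_card (F : finFieldType) (Q : nat) (W : F) :
  2%N \in [pchar F] -> [pchar F].-nat Q -> (2 < Q)%N -> #|F| = (Q ^ 2)%N ->
  #|F|.-1.-primitive_root W -> Gq_map (fun x => W * x).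
Proof.
move=> pchar2 pQ Q2 FQ primW.
have W0 : W != 0 by rewrite (prim_root_eq0 primW) FQ; nia.
have lambda0 : 1 + W ^+ Q.+1 != 0.
  rewrite addrC -(oppr_pchar2 pchar2 1) subr_eq0 -(prim_order_dvd primW) FQ.
  by apply/negP => /dvdn_leq; nia.
apply: (@Gq_map_scale_of_binomial_square _ 1 W (1 + W ^+ Q.+1) 1 Q) => //.
- by rewrite oner_eq0.
- by apply/andP; split; lia.
- by rewrite FQ; nia.
move=> x; rewrite /binomial_map !mul1r !expr1 exprDn_pchar // exprMn -exprM mulnn -FQ.
rewrite expf_card exprS; apply/eqP; rewrite -subr_eq0; apply/eqP.
by transitivity (2%:R * (W * x ^+ Q)); [ring | rewrite (pcharf0 pchar2) mul0r].
Qed.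

Lemma big_nat_double (R : nmodType) (h : nat -> R) N :
  \sum_(0 <= i < N.*2) h i = \sum_(0 <= i < N) (h i.*2 + h i.*2.+1).
Proof.
elim: N => [|N IHN]; first by rewrite !big_geq.
by rewrite doubleS !big_nat_recr //= IHN addrA.
Qed.

Lemma big_nat_blocks (R : nmodType) (h : nat -> R) r u :
  \sum_(0 <= i < r * u) h i = \sum_(0 <= l < u) \sum_(0 <= i < r) h (r * l + i).
Proof.
elim: u => [|u IHu]; first by rewrite muln0 !big_geq.
rewrite big_nat_recr //= -IHu mulnS addnC (big_cat_nat _ (leq_addr r (r * u))) //=.
congr (_ + _); rewrite -{1}[(r * u)%N]add0n big_addn addKn.
by apply: eq_bigr => i _; rewrite addnC.
Qed.

Lemma geometric_sum_eq0 (R : idomainType) (z : R) n :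
  z ^+ n = 1 -> z != 1 -> \sum_(i < n) z ^+ i = 0.
Proof.
move=> zn z1; have /esym/eqP := subrX1 z n.
by rewrite zn subrr mulf_eq0 subr_eq0 (negbTE z1) => /eqP.
Qed.

Lemma expr_fixed_pow (R : pzSemiRingType) (b : R) Q m : b ^+ Q = b -> b ^+ (Q ^ m) = b.
Proof. by move=> bQ; elim: m => [|m IHm]; rewrite ?expr1 // expnSr exprM IHm bQ. Qed.

Section LinearizedChain.
Variables (F : finFieldType) (Q r t u : nat).
Hypotheses (pchar2 : 2%N \in [pchar F]) (pQ : [pchar F].-nat Q) (Q_gt1 : (1 < Q)%N).
Hypotheses (FQ : #|F| = (Q ^ r)%N) (odd_r : odd r).
Hypotheses (t_gt0 : (0 < t)%N) (two_pow_t : (2 ^ t)%N = (r * u).+1).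

Definition lin_binom (b : F) (j : nat) (x : F) : F := x + b * x ^+ (Q ^ j).

Fixpoint lin_chain (s : nat) (b : F) (j : nat) (x : F) : F :=
  if s is s'.+1 then lin_chain s' (b ^+ 2) j.*2 (lin_binom b j x) else x.

Lemma lin_chain_sum s b j x : b ^+ Q = b ->
  lin_chain s b j x = \sum_(0 <= n < 2 ^ s) b ^+ n * x ^+ (Q ^ (j * n)).
Proof.
elim: s b j x => [|s IHs] b j x bQ /=.
  by rewrite expn0 big_nat1 expr0 mul1r muln0 expr1.
rewrite IHs; last by rewrite exprAC bQ.
rewrite expnS mul2n big_nat_double; apply: eq_bigr => n _.
rewrite /lin_binom exprDn_pchar ?pnatX ?pQ // -exprM mul2n.
rewrite exprMn (expr_fixed_pow _ bQ) -exprM -expnD.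
have -> : (j + j.*2 * n = j * n.*2.+1)%N by rewrite -!muln2; ring.
have -> : (j.*2 * n = j * n.*2)%N by rewrite -!muln2; ring.
by rewrite exprS; ring.
Qed.

Lemma lin_chain_id b j x : b ^+ Q = b -> (b ^+ r) ^+ u = 1 -> b ^+ r != 1 ->
  lin_chain t b j x = x.
Proof.
move=> bQ bru br; rewrite lin_chain_sum // two_pow_t big_nat_recl //.
rewrite muln0 expr0 mul1r expr1 big_nat_blocks.
(* As x^(Q^r) = x, the l-th block of r terms is (b^r)^l times the 0-th one. *)
set C := \sum_(0 <= i < r) b ^+ i.+1 * x ^+ (Q ^ (j * i.+1)).
have blockE l : \sum_(0 <= i < r) b ^+ (r * l + i).+1 * x ^+ (Q ^ (j * (r * l + i).+1))
    = (b ^+ r) ^+ l * C.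
  rewrite /C mulr_sumr; apply: eq_bigr => i _.
  have -> : (Q ^ (j * (r * l + i).+1) = Q ^ (j * i.+1) * #|F| ^ (j * l))%N.
    by rewrite FQ -expnM -expnD; congr (Q ^ _)%N; ring.
  by rewrite exprM expf_cardX -addnS exprD -exprM mulrA.
rewrite (eq_bigr _ (fun l _ => blockE l)) -mulr_suml big_mkord.
by rewrite geometric_sum_eq0 // mul0r addr0.
Qed.

(* The condition on [j] makes the exponent Q^(j mod r) of [lin_binom b j]
   exceed 1, so that [lin_binom b j] is a genuine binomial. *)
Definition admissible (b : F) (j : nat) : Prop :=
  [/\ b ^+ Q = b, (b ^+ r) ^+ u = 1, b ^+ r != 1 & ~~ (r %| j)%N].

Lemma admissible_sqr b j : admissible b j -> admissible (b ^+ 2) j.*2.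
Proof.
case=> bQ bru br rj; split.
- by rewrite exprAC bQ.
- by rewrite [(b ^+ 2) ^+ r]exprAC exprAC bru expr1n.
- by rewrite exprAC sqrf_eq1 (oppr_pchar2 pchar2) orbb.
- by rewrite -muln2 Gauss_dvdl ?coprimen2.
Qed.

Lemma lin_binom_inj b j : admissible b j -> injective (lin_binom b j).
Proof.
case=> bQ bru br _ x y xy.
rewrite -(lin_chain_id j x bQ bru br) -(lin_chain_id j y bQ bru br).
by rewrite -(prednK t_gt0) /= xy.
Qed.

Lemma lin_binomE b j : lin_binom b j =1 binomial_map 1 b 1 (Q ^ (j %% r)).
Proof.
move=> x; rewrite /lin_binom /binomial_map mul1r expr1.
have -> : (Q ^ j = Q ^ (j %% r) * #|F| ^ (j %/ r))%N.
  by rewrite FQ -expnM -expnD mulnC addnC -divn_eq.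
by rewrite exprM expf_cardX.
Qed.

Lemma Gq_map_scaled_lin_binom (mu b : F) j :
  mu != 0 -> admissible b j -> Gq_map (fun x => mu * lin_binom b j x).
Proof.
move=> mu0 adm; have [_ bru _ rj] := adm.
have ru_gt0 : (0 < r * u)%N.
  by rewrite -ltnS -two_pow_t -[X in (X < _)%N](expn0 2) ltn_exp2l.
have b0 : b != 0.
  apply/eqP => b0; move/eqP: bru.
  by rewrite b0 -exprM expr0n (gtn_eqF ru_gt0) eq_sym oner_eq0.
apply: (eq_Gq_map (f := fun x => mu * binomial_map 1 b 1 (Q ^ (j %% r)) x)).
  by move=> x; rewrite lin_binomE.
apply: Gq_map_scaled_binomial; rewrite ?oner_eq0 //.
- by rewrite /= -[X in (X < _)%N](expn0 Q) ltn_exp2l // lt0n.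
- by rewrite FQ ltn_exp2l // ltn_pmod // odd_gt0.
- exact: eq_inj (lin_binom_inj adm) (lin_binomE b j).
Qed.

Lemma Gq_map_scaled_lin_chain (W : F) s b j :
  W != 0 -> admissible b j -> Gq_map (fun x => W * lin_chain s.+1 b j x).
Proof.
move=> W0; elim: s b j => [|s IHs] b j adm; first exact: Gq_map_scaled_lin_binom.
apply: (eq_Gq_map (f := (fun x => W * lin_chain s.+1 (b ^+ 2) j.*2 x) \o lin_binom b j)) => //.
apply: Gq_map_comp; last exact: IHs (admissible_sqr adm).
apply: (eq_Gq_map (f := fun x => 1 * lin_binom b j x)); first by move=> x; rewrite mul1r.
exact: Gq_map_scaled_lin_binom (oner_neq0 _) adm.
Qed.

Lemma Gq_map_scale_of_admissible (g W : F) :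
  admissible g 1 -> W != 0 -> Gq_map (fun x => W * x).
Proof.
move=> adm W0; have [gQ gru gr _] := adm.
apply: eq_Gq_map (Gq_map_scaled_lin_chain t.-1 W0 adm) => x.
by rewrite prednK // lin_chain_id.
Qed.

End LinearizedChain.

Lemma odd_composite_factor e : odd e -> ~~ prime e -> (1 < e)%N ->
  exists k r, [/\ e = (k * r)%N, odd r, (1 < r)%N & (r.+2 <= 2 ^ k)%N].
Proof.
move=> odd_e npe e_gt1; set r := pdiv e.
have pr : prime r by rewrite pdiv_prime.
set k := (e %/ r)%N; have eE : e = (k * r)%N by rewrite divnK ?pdiv_dvd.
have k1 : k != 1%N by apply: contraNneq npe => k1; rewrite eE k1 mul1n.
have k0 : k != 0%N by apply: contraTneq e_gt1 => k0; rewrite eE k0.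
have rk : (r <= k)%N by apply: pdiv_min_dvd; [lia | rewrite eE dvdn_mulr].
have r_gt1 := prime_gt1 pr.
have odd_r : odd r by apply: dvdn_odd odd_e; rewrite pdiv_dvd.
exists k, r; split => //.
have : (k.-1 < 2 ^ k.-1)%N := ltn_expl _ (ltnSn 1).
rewrite -ltn_double -!muln2 -expnSr prednK; last lia.
have : r != 2%N by apply: contraTneq odd_r => ->.
lia.
Qed.

Lemma odd_dvdn_pred_exp2 M : odd M -> (M %| (2 ^ totient M).-1)%N.
Proof.
move=> odd_M; rewrite -subn1 -eqn_mod_dvd ?expn_gt0 //.
by apply/eqP; rewrite Euler_exp_totient // coprime2n.
Qed.

Lemma Gq_map_scale_char2_odd_composite (F : finFieldType) (e : nat) (W : F) :
  2%N \in [pchar F] -> #|F| = (2 ^ e)%N -> odd e -> ~~ prime e -> (1 < e)%N ->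
  #|F|.-1.-primitive_root W -> Gq_map (fun x => W * x).
Proof.
move=> pchar2 Fe odd_e npe e_gt1 primW.
have [k [r [eE odd_r r_gt1 rQ]]] := odd_composite_factor odd_e npe e_gt1.
set Q := (2 ^ k)%N in rQ.
have FQ : #|F| = (Q ^ r)%N by rewrite Fe eE expnM.
have pQ : [pchar F].-nat Q by rewrite pnatX (pnatE _ (pcharf_prime pchar2)) pchar2.
have k_gt0 : (0 < k)%N by move: rQ; rewrite /Q; case: (k); lia.
have odd_M : odd (r * Q.-1).
  by rewrite oddM odd_r -subn1 oddB ?expn_gt0 // oddX (gtn_eqF k_gt0).
have M_dvd := odd_dvdn_pred_exp2 odd_M; set t := totient _ in M_dvd.
have t_gt0 : (0 < t)%N by rewrite totient_gt0 odd_gt0.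
set u := ((2 ^ t).-1 %/ r)%N.
have ru : (r * u = (2 ^ t).-1)%N.
  by rewrite mulnC divnK // (dvdn_trans (dvdn_mulr _ (dvdnn r)) M_dvd).
have primg : (Q.-1).-primitive_root (W ^+ (#|F|.-1 %/ Q.-1)).
  by apply: (dvdn_prim_root primW); rewrite FQ dvdn_pred_predX.
apply: (@Gq_map_scale_of_admissible F Q r t u pchar2 pQ _ FQ odd_r t_gt0 _
          (W ^+ (#|F|.-1 %/ Q.-1))).
- by rewrite /Q; lia.
- by rewrite ru prednK ?expn_gt0.
- split.
  + have Q_gt0 : (0 < Q)%N by lia.
    by rewrite -[X in _ ^+ X = _](prednK Q_gt0) exprS (prim_expr_order primg) mulr1.
  + by apply/eqP; rewrite -exprM -(prim_order_dvd primg) ru (dvdn_trans (dvdn_mull r (dvdnn _)) M_dvd).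
  + by rewrite -(prim_order_dvd primg); apply/negP => /dvdn_leq; lia.
  + by rewrite dvdn1; lia.
- by rewrite (prim_root_eq0 primW) FQ -subn1 subn_eq0 -[X in (_ <= X)%N](expn0 Q) leq_exp2l; lia.
Qed.

Lemma Gq_map_scale_prim_root (F : finFieldType) (W : F) :
  (5 < #|F|)%N -> (forall p, prime p -> #|F| <> (2 ^ p)%N) ->
  #|F|.-1.-primitive_root W -> Gq_map (fun x => W * x).
Proof.
move=> F5 F_not_2p primW.
have [two0 | two_neq0] := eqVneq (2%:R : F) 0; last exact: Gq_map_scale_odd_char.
have pchar2 : 2%N \in [pchar F] by apply/andP; split => //; apply/eqP.
have Fe := card_pprimeChar pchar2; set e := logn 2 #|F| in Fe.
have e_gt2 : (2 < e)%N.
  rewrite ltnNge; apply/negP => e2.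
  have : (2 ^ e <= 2 ^ 2)%N by rewrite leq_exp2l.
  by move: F5; rewrite Fe; lia.
have npe : ~~ prime e by apply/negP => /F_not_2p.
have [odd_e | even_e] := boolP (odd e).
  by apply: (Gq_map_scale_char2_odd_composite pchar2 Fe) => //; lia.
have eE : e = (e./2).*2 by rewrite -[LHS]odd_double_half (negbTE even_e).
apply: (Gq_map_scale_char2_square_card (Q := (2 ^ e./2)%N) pchar2) => //.
- by rewrite pnatX (pnatE _ (pcharf_prime pchar2)) pchar2.
- by rewrite -[X in (X < _)%N](expn1 2) ltn_exp2l //; lia.
- by rewrite Fe -expnM muln2 -eE.
Qed.

Lemma Gq_perm_of_scale (F : finFieldType) (w : {unit F}) :
  Gq_map (fun x => val w * x) ->
  exists2 s : {perm {unit F}}, s \in Gq F & forall c, s c = (w * c)%g.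
Proof. by move=> [s Gs sE]; exists s => // c; apply: val_inj; rewrite sE val_unitM. Qed.

Lemma porbit_mul_generator (gT : finGroupType) (w : gT) (s : {perm gT}) :
  <[w]>%g = [set: gT] -> (forall c, s c = (w * c)%g) -> forall c, porbit s c = [set: gT].
Proof.
move=> gen sE c; apply/setP => y; rewrite inE; apply/porbitP.
have sX i d : (s ^+ i)%g d = (w ^+ i * d)%g.
  elim: i d => [|i IHi] d; first by rewrite !expg0 perm1 mul1g.
  by rewrite expgSr permM IHi sE expgS mulgA.
have : (y * c^-1)%g \in <[w]>%g by rewrite gen inE.
by case/cycleP => i Ei; exists i; rewrite sX -Ei mulgKV.
Qed.

Local Close Scope ring_scope.
Unset Implicit Arguments.

Theorem corollary4p2 (q : nat) (F : finFieldType) :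
  #|F| = q -> (5 < q)%N -> (forall p : nat, prime p -> q <> 2 ^ p) ->
  forall w : {unit F}, <[w]>%g = [set: {unit F}] ->
  exists s : {perm {unit F}},
    [/\ s \in Gq F, (forall c : {unit F}, s c = (w * c)%g) &
        forall c : {unit F}, #|porbit s c| = q.-1].
Proof.
move=> <- F5 F_not_2p w gen.
have [s Gs sE] := Gq_perm_of_scale (Gq_map_scale_prim_root F5 F_not_2p (generator_prim_root gen)).
exists s; split => // c.
by rewrite (porbit_mul_generator gen sE) card_finField_unit.
Qed.
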